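(* Let $G$ be a group with a split $BN$-pair $(H,U,N)$ whose Weyl group is $W=N/H=\{1,s_1\}$. Let $n_1\in N$ with $s_1=n_1H$, let $U^-:=U^{n_1}$, $(U^-)^*:=U^-\setminus\{1\}$, and \[ \widetilde H:=\{h\in H:\ \exists\, u^-\in (U^-)^*\text{ with } Uu^-U=Un_1hU\}. \] Then the following are equivalent: (a) $(U^-)^*\cap Un_1hU\neq\emptyset$ for all $h\in H$ (equivalently, $\widetilde H=H$); (b) $U(U^-)^*U=Un_1HU$; (c) $G=(UU^-)^2=UU^-UU^-$.
   Context: A split $BN$-pair $(H,U,N)$ for $G$ means $B=H\ltimes U$ and $N$ satisfy the axioms of split $BN$-pairs (as in Carter, Finite Groups of Lie Type, \S 2.5) with $H=B\cap N$. Here $s_1$ is the longest element of $W$, so $U^{-}=U^{n_1}$ is the opposite unipotent subgroup. Products of subsets are setwise. *)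

(* Abstract (possibly infinite) groups, subsets, setwise products and
   split BN-pairs in the sense of Carter, Finite Groups of Lie Type, 2.5. *)
Set Implicit Arguments.
Unset Strict Implicit.

Record group := Group {
  gcar :> Type;
  gmul : gcar -> gcar -> gcar;
  g1 : gcar;
  ginv : gcar -> gcar;
  gmulA : forall x y z, gmul x (gmul y z) = gmul (gmul x y) z;
  gmul1 : forall x, gmul g1 x = x;
  gmulV : forall x, gmul (ginv x) x = g1
}.

Arguments gmul {g}.
Arguments g1 {g}.
Arguments ginv {g}.

Definition gset (G : group) := G -> Prop.

Section Sets.
Variable G : group.

Definition set1 (x : G) : gset G := fun y => y = x.
Definition setU (A B : gset G) : gset G := fun x => A x \/ B x.
Definition setI (A B : gset G) : gset G := fun x => A x /\ B x.
Definition setD1 (A : gset G) : gset G := fun x => A x /\ x <> g1.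
Definition setmul (A B : gset G) : gset G :=
  fun x => exists a b, A a /\ B b /\ x = gmul a b.
Definition subset (A B : gset G) : Prop := forall x, A x -> B x.
Definition seteq (A B : gset G) : Prop := forall x, A x <-> B x.
(* conjugate A^g = g^-1 A g *)
Definition conjs (A : gset G) (g : G) : gset G :=
  fun x => A (gmul g (gmul x (ginv g))).

Definition is_subgroup (A : gset G) : Prop :=
  A g1 /\ (forall x y, A x -> A y -> A (gmul x y)) /\
  (forall x, A x -> A (ginv x)).

Definition normal (A B : gset G) : Prop :=
  is_subgroup A /\ subset A B /\
  (forall b a, B b -> A a -> A (gmul (ginv b) (gmul a b))).

Definition generated (A : gset G) : gset G :=
  fun x => forall K, is_subgroup K -> subset A K -> K x.

(* Split BN-pair (H,U,N) for G, with B = U H and a set S of representatives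
   in N of the distinguished generating involutions of W = N/H. *)
Definition split_BN_pair (B N H U S : gset G) : Prop :=
  is_subgroup B /\ is_subgroup N /\
  (forall g, generated (setU B N) g) /\
  seteq H (setI B N) /\ normal H N /\
  (* (iii) W = N/H is generated by the involutions sH, s in S *)
  (forall s, S s -> N s /\ ~ H s /\ H (gmul s s)) /\
  (forall n, N n -> generated (setU H S) n) /\
  (forall s, S s -> ~ seteq (conjs B (ginv s)) B) /\
  (forall n s, N n -> S s ->
     subset (setmul (setmul (set1 n) B) (set1 s))
            (setU (setmul (setmul B (set1 n)) B)
                  (setmul (setmul B (set1 (gmul n s))) B))) /\
  normal U B /\ seteq B (setmul U H) /\
  (forall x, U x -> H x -> x = g1) /\
  seteq (fun x => forall n, N n -> B (gmul (ginv n) (gmul x n))) H.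

End Sets.

From Stdlib Require Import ssreflect Classical.

(* Since W = {1, s1}, the Bruhat decomposition reads G = B \cup U n1 H U:
   the exchange axiom makes the right-hand side a subgroup containing B and N.
   An element of U^- \cap B lies in every N-conjugate of B, hence in H, hence
   (conjugated by n1) in U \cap H = 1; so every element of (U^-)^* lies in some
   cell U n1 h U, and (a) <-> (b) only says which cells are reached.  For
   (b) -> (c), an element u h of B equals u (h w) w^-1 with w in (U^-)^* and
   h w in U (U^-)^* U by (b); for (c) -> (a), writing n1 h = u1 v1 u2 v2 puts
   v1 in U n1 h U because n1 h n1^-1 lies in H and normalises U, and v1 <> 1
   because that cell misses B. *)

Set Implicit Arguments.
Unset Strict Implicit.

Local Notation "x ** y" := (gmul x y) (at level 40, left associativity).

Section GroupLaws.
Variable G : group.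
Implicit Types x y z : G.

Lemma mulgV x : x ** ginv x = g1.
Proof.
have idem : (x ** ginv x) ** (x ** ginv x) = x ** ginv x.
  by rewrite -gmulA (gmulA (ginv x) x) gmulV gmul1.
by rewrite -(gmulV (x ** ginv x)) -{3}idem gmulA gmulV gmul1.
Qed.

Lemma mulg1 x : x ** g1 = x.
Proof. by rewrite -(gmulV x) gmulA mulgV gmul1. Qed.

Lemma invK x : ginv (ginv x) = x.
Proof. by rewrite -[LHS]mulg1 -(gmulV x) gmulA gmulV gmul1. Qed.

Lemma mulKg x y : ginv x ** (x ** y) = y.
Proof. by rewrite gmulA gmulV gmul1. Qed.

Lemma mulVKg x y : x ** (ginv x ** y) = y.
Proof. by rewrite gmulA mulgV gmul1. Qed.

Lemma inv1 : ginv (@g1 G) = g1.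
Proof. by rewrite -[LHS]mulg1 gmulV. Qed.

Lemma invM x y : ginv (x ** y) = ginv y ** ginv x.
Proof.
have e : (x ** y) ** (ginv y ** ginv x) = g1 by rewrite -gmulA mulVKg mulgV.
by rewrite -[LHS]mulg1 -e gmulA gmulV gmul1.
Qed.

Lemma mulgI x y z : x ** y = x ** z -> y = z.
Proof. by move=> e; rewrite -(mulKg x y) e mulKg. Qed.

End GroupLaws.

Ltac gnorm := repeat progress rewrite
  ?invM ?invK ?inv1 -?gmulA ?mulKg ?mulVKg ?gmulV ?mulgV ?mulg1 ?gmul1.

Lemma transport (T : Type) (P : T -> Prop) x y : P x -> x = y -> P y.
Proof. by move=> Px <-. Qed.

Section Subgroups.
Variables (G : group) (A : gset G).
Hypothesis gA : is_subgroup A.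

Lemma group1 : A g1.
Proof. by case: gA. Qed.

Lemma groupM x y : A x -> A y -> A (x ** y).
Proof. by case: gA => _ [+ _]; apply. Qed.

Lemma groupV x : A x -> A (ginv x).
Proof. by case: gA => _ [_]; apply. Qed.

End Subgroups.

Section DoubleCosets.
Variables (G : group) (U : gset G).

Definition dcoset (x : G) : gset G :=
  fun g => exists a b, U a /\ U b /\ g = a ** (x ** b).

Lemma setmul_set1P x g : setmul (setmul U (set1 x)) U g <-> dcoset x g.
Proof.
split=> [[p [b [[a [y [Ua [-> ->]]]] [Ub ->]]]] | [a [b [Ua [Ub ->]]]]].
  by exists a, b; do 2 split=> //; gnorm.
exists (a ** x), b; split; first by exists a, x.
by split=> //; gnorm.
Qed.

Lemma setmul_dcosetP (Y : gset G) g :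
  setmul (setmul U Y) U g <-> exists y, Y y /\ dcoset y g.
Proof.
split=> [[p [b [[a [y [Ua [Yy ->]]]] [Ub ->]]]] | [y [Yy [a [b [Ua [Ub ->]]]]]]].
  by exists y; split=> //; exists a, b; do 2 split=> //; gnorm.
exists (a ** y), b; split; first by exists a, y.
by split=> //; gnorm.
Qed.

Lemma setmul_set1_setmulP (K : gset G) x g :
  setmul (setmul U (setmul (set1 x) K)) U g <-> exists k, K k /\ dcoset (x ** k) g.
Proof.
split=> [/setmul_dcosetP [y [[x' [k [-> [Kk ->]]]] xkg]] | [k [Kk xkg]]].
  by exists k.
by apply/setmul_dcosetP; exists (x ** k); split=> //; exists x, k.
Qed.

Lemma setmul4P (Y : gset G) g :
  setmul (setmul (setmul U Y) U) Y g <->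
  exists u1 y1 u2 y2, U u1 /\ Y y1 /\ U u2 /\ Y y2 /\ g = u1 ** y1 ** u2 ** y2.
Proof.
split=> [[p [y2 [[q [u2 [[u1 [y1 [Uu1 [Yy1 ->]]]] [Uu2 ->]]]] [Yy2 ->]]]] |
         [u1 [y1 [u2 [y2 [Uu1 [Yy1 [Uu2 [Yy2 ->]]]]]]]]].
  by exists u1, y1, u2, y2.
exists (u1 ** y1 ** u2), y2; split=> //.
by exists (u1 ** y1), u2; split=> //; exists u1, y1.
Qed.

Hypothesis gU : is_subgroup U.

Lemma dcoset_refl x : dcoset x x.
Proof. by exists g1, g1; split; [|split]; [exact: (group1 gU) | exact: (group1 gU) | gnorm]. Qed.

Lemma dcoset_sym x y : dcoset x y -> dcoset y x.
Proof.
move=> [a [b [Ua [Ub ->]]]].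
by exists (ginv a), (ginv b); split; [|split]; [exact: groupV | exact: groupV | gnorm].
Qed.

Lemma dcoset_trans x y z : dcoset x y -> dcoset y z -> dcoset x z.
Proof.
move=> [a [b [Ua [Ub ->]]]] [a' [b' [Ua' [Ub' ->]]]].
by exists (a' ** a), (b ** b'); split; [|split]; [exact: groupM | exact: groupM | gnorm].
Qed.

End DoubleCosets.

Section RankOneSplitBNPair.
Variables (G : group) (B N H U S : gset G) (n1 : G).
Hypotheses (gB : is_subgroup B) (gN : is_subgroup N).
Hypothesis BN_generate : forall g, generated (setU B N) g.
Hypothesis H_BcapN : seteq H (setI B N).
Hypothesis H_normal_N : normal H N.
Hypothesis S_reflections : forall s, S s -> N s /\ ~ H s /\ H (s ** s).
Hypothesis N_generated : forall n, N n -> generated (setU H S) n.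
Hypothesis exchange : forall n s, N n -> S s ->
  subset (setmul (setmul (set1 n) B) (set1 s))
         (setU (setmul (setmul B (set1 n)) B) (setmul (setmul B (set1 (n ** s))) B)).
Hypothesis U_normal_B : normal U B.
Hypothesis B_UH : seteq B (setmul U H).
Hypothesis UcapH : forall x, U x -> H x -> x = g1.
Hypothesis B_core : seteq (fun x => forall n, N n -> B (ginv n ** (x ** n))) H.
Hypotheses (Nn1 : N n1) (Hn1 : ~ H n1).
Hypothesis N_rank1 : forall n, N n -> H n \/ exists h, H h /\ n = n1 ** h.

Lemma groupH : is_subgroup H.
Proof. by case: H_normal_N. Qed.

Lemma groupU : is_subgroup U.
Proof. by case: U_normal_B. Qed.

Lemma H_sub_B x : H x -> B x.
Proof. by case/H_BcapN. Qed.

Lemma U_sub_B x : U x -> B x.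
Proof. by case: U_normal_B => _ [+ _]; apply. Qed.

Lemma U_conjB b u : B b -> U u -> U (ginv b ** (u ** b)).
Proof. by case: U_normal_B => _ [_]; apply. Qed.

Lemma U_conjBV b u : B b -> U u -> U (b ** (u ** ginv b)).
Proof. by move=> Bb Uu; have := U_conjB (groupV gB Bb) Uu; rewrite invK. Qed.

Lemma H_conjN n h : N n -> H h -> H (ginv n ** (h ** n)).
Proof. by case: H_normal_N => _ [_]; apply. Qed.

Lemma H_conjNV n h : N n -> H h -> H (n ** (h ** ginv n)).
Proof. by move=> Nn Hh; have := H_conjN (groupV gN Nn) Hh; rewrite invK. Qed.

Lemma B_factor x : B x -> exists u h, U u /\ H h /\ x = u ** h.
Proof. by case/B_UH => u [h [Uu [Hh ->]]]; exists u, h. Qed.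

Lemma n1_notin_B : ~ B n1.
Proof. by move=> Bn1; apply: Hn1; apply/H_BcapN. Qed.

Lemma H_n1_mul n : N n -> ~ H n -> H (n1 ** n).
Proof.
move=> Nn nHn; have [//|[h [Hh /mulgI e]]] := N_rank1 (groupM gN Nn1 Nn).
by case: nHn; rewrite e.
Qed.

Definition cell : gset G := fun g => exists h, H h /\ dcoset U (n1 ** h) g.

Lemma cell_n1H h : H h -> cell (n1 ** h).
Proof. by exists h; split=> //; exact: (dcoset_refl groupU). Qed.

Lemma cell_n1 : cell n1.
Proof. by apply: (transport (cell_n1H (group1 groupH))); gnorm. Qed.

Lemma cell_n1V : cell (ginv n1).
Proof.
have Hn1n1 := H_n1_mul Nn1 Hn1.
by apply: (transport (cell_n1H (groupV groupH Hn1n1))); gnorm.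
Qed.

Lemma cell_mulBl x y : B x -> cell y -> cell (x ** y).
Proof.
move=> Bx [h [Hh [a [b [Ua [Ub ->]]]]]].
have [u0 [h0 [Uu0 [Hh0 ->]]]] := B_factor Bx.
exists (ginv n1 ** (h0 ** n1) ** h); split.
  exact: (groupM groupH (H_conjN Nn1 Hh0) Hh).
exists (u0 ** (h0 ** (a ** ginv h0))), b; split; last by split=> //; gnorm.
exact: (groupM groupU Uu0 (U_conjBV (H_sub_B Hh0) Ua)).
Qed.

Lemma cell_mulBr x y : cell y -> B x -> cell (y ** x).
Proof.
move=> [h [Hh [a [b [Ua [Ub ->]]]]]] Bx.
have [u0 [h0 [Uu0 [Hh0 ->]]]] := B_factor Bx.
exists (h ** h0); split; first exact: (groupM groupH Hh Hh0).
exists a, (ginv h0 ** ((b ** u0) ** h0)); split=> //; split; last by gnorm.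
exact: (U_conjB (H_sub_B Hh0) (groupM groupU Ub Uu0)).
Qed.

Lemma Bcell_mulBl x y : B x -> setU B cell y -> setU B cell (x ** y).
Proof.
by move=> Bx [By|cy]; [left; exact: (groupM gB Bx By) | right; exact: cell_mulBl].
Qed.

Lemma Bcell_mulBr x y : setU B cell y -> B x -> setU B cell (y ** x).
Proof.
by move=> [By|cy] Bx; [left; exact: (groupM gB By Bx) | right; exact: cell_mulBr].
Qed.

Lemma S_nonempty : exists s, S s.
Proof.
apply: NNPP => noS; apply: Hn1.
apply: (N_generated Nn1 groupH) => x [//|Sx].
by case: noS; exists x.
Qed.

Lemma n1Bn1 b : B b -> setU B cell (n1 ** (b ** n1)).
Proof.
move=> Bb; have [s Ss] := S_nonempty.
have [Ns [nHs _]] := S_reflections Ss.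
(* s = n1 hs, and the exchange axiom places n1 b s in B n1 B or in B (n1 s) B = B *)
have [//|[hs [Hhs es]]] := N_rank1 Ns.
have Bhs' := groupV gB (H_sub_B Hhs).
have -> : n1 ** (b ** n1) = (n1 ** b ** s) ** ginv hs by rewrite es; gnorm.
have : setmul (setmul (set1 n1) B) (set1 s) (n1 ** b ** s).
  by exists (n1 ** b), s; split; first by exists n1, b.
case/(exchange Nn1 Ss) => [[p [b2 [[b1 [y [Bb1 [-> ->]]]] [Bb2 ->]]]] |
                         [p [b2 [[b1 [y [Bb1 [-> ->]]]] [Bb2 ->]]]]].
  right; apply: (transport (cell_mulBl Bb1 (cell_mulBr cell_n1 (groupM gB Bb2 Bhs')))).
  by gnorm.
left; apply: (groupM gB _ Bhs'); apply: (groupM gB _ Bb2).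
exact: (groupM gB Bb1 (H_sub_B (H_n1_mul Ns nHs))).
Qed.

Lemma bruhat_subgroup : is_subgroup (setU B cell).
Proof.
split; first by left; exact: (group1 gB).
split.
- move=> x y [Bx|[h [Hh [a [b [Ua [Ub ->]]]]]]] BCy; first exact: Bcell_mulBl.
  case: BCy => [By|[h' [Hh' [a' [b' [Ua' [Ub' ->]]]]]]].
    by apply: Bcell_mulBr => //; right; exists h; split=> //; exists a, b.
  have Bhba' : B (h ** b ** a').
    exact: (groupM gB (groupM gB (H_sub_B Hh) (U_sub_B Ub)) (U_sub_B Ua')).
  have Bh'b' := groupM gB (H_sub_B Hh') (U_sub_B Ub').
  apply: (transport (Bcell_mulBl (U_sub_B Ua) (Bcell_mulBr (n1Bn1 Bhba') Bh'b'))).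
  by gnorm.
- move=> x [Bx|[h [Hh [a [b [Ua [Ub ->]]]]]]]; first by left; exact: (groupV gB Bx).
  have Bbh := groupM gB (groupV gB (U_sub_B Ub)) (groupV gB (H_sub_B Hh)).
  right; apply: (transport (cell_mulBl Bbh (cell_mulBr cell_n1V (groupV gB (U_sub_B Ua))))).
  by gnorm.
Qed.

Lemma bruhat_decomposition g : setU B cell g.
Proof.
apply: (BN_generate g bruhat_subgroup) => x [Bx|Nx]; first by left.
have [Hx|[h [Hh ->]]] := N_rank1 Nx; first by left; exact: H_sub_B.
by right; exact: cell_n1H.
Qed.

Lemma cell_notB g : cell g -> ~ B g.
Proof.
move=> [h [Hh [a [b [Ua [Ub ->]]]]]] Bg; apply: n1_notin_B.
have Bhb := groupM gB (H_sub_B Hh) (U_sub_B Ub).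
apply: (transport (groupM gB (groupM gB (groupV gB (U_sub_B Ua)) Bg) (groupV gB Bhb))).
by gnorm.
Qed.

Lemma Um_capB v : conjs U n1 v -> B v -> v = g1.
Proof.
move=> Uv Bv.
have Hn1n1 := H_sub_B (H_n1_mul Nn1 Hn1).
have Bv' : B (ginv n1 ** (v ** n1)).
  have -> : ginv n1 ** (v ** n1) =
            ginv (n1 ** n1) ** ((n1 ** (v ** ginv n1)) ** (n1 ** n1)) by gnorm.
  exact: (groupM gB (groupV gB Hn1n1) (groupM gB (U_sub_B Uv) Hn1n1)).
have Hv : H v.
  apply/(B_core v) => n Nn.
  have [Hn|[h [Hh ->]]] := N_rank1 Nn.
    exact: (groupM gB (groupV gB (H_sub_B Hn)) (groupM gB Bv (H_sub_B Hn))).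
  apply: (transport (groupM gB (groupV gB (H_sub_B Hh)) (groupM gB Bv' (H_sub_B Hh)))).
  by gnorm.
have e := UcapH Uv (H_conjNV Nn1 Hv).
have -> : v = ginv n1 ** ((n1 ** (v ** ginv n1)) ** n1) by gnorm.
by rewrite e; gnorm.
Qed.

Lemma Ums_sub_cell v : setD1 (conjs U n1) v -> cell v.
Proof.
move=> [Uv v_ne1]; have [Bv|//] := bruhat_decomposition v.
by case: v_ne1; exact: Um_capB.
Qed.

Definition Ums_meets_cells : Prop := forall h, H h ->
  exists v, setD1 (conjs U n1) v /\ setmul (setmul U (set1 (n1 ** h))) U v.

Definition UUmsU_eq_Un1HU : Prop :=
  seteq (setmul (setmul U (setD1 (conjs U n1))) U)
        (setmul (setmul U (setmul (set1 n1) H)) U).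

Definition UUmUUm_full : Prop :=
  forall g, setmul (setmul (setmul U (conjs U n1)) U) (conjs U n1) g.

Lemma UUmsU_eq_of_meets : Ums_meets_cells -> UUmsU_eq_Un1HU.
Proof.
move=> meets g.
split=> [/setmul_dcosetP [v [Umsv vg]] | /setmul_set1_setmulP [h [Hh n1hg]]].
  have [h [Hh n1hv]] := Ums_sub_cell Umsv.
  apply/setmul_set1_setmulP; exists h; split=> //.
  exact: (dcoset_trans groupU n1hv vg).
have [v [Umsv /setmul_set1P n1hv]] := meets h Hh.
apply/setmul_dcosetP; exists v; split=> //.
exact: (dcoset_trans groupU (dcoset_sym groupU n1hv) n1hg).
Qed.

Lemma meets_of_UUmsU_eq : UUmsU_eq_Un1HU -> Ums_meets_cells.
Proof.
move=> eqUU h Hh.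
have [v [Umsv vn1h]] : exists v, setD1 (conjs U n1) v /\ dcoset U v (n1 ** h).
  by apply/setmul_dcosetP/eqUU/setmul_set1_setmulP; exact: cell_n1H.
by exists v; split=> //; apply/setmul_set1P; exact: (dcoset_sym groupU vn1h).
Qed.

Lemma UUmUUm_full_of_UUmsU_eq : UUmsU_eq_Un1HU -> UUmUUm_full.
Proof.
move=> eqUU g; apply/setmul4P.
have cell_UUmsU x : cell x -> exists v, setD1 (conjs U n1) v /\ dcoset U v x.
  by move=> cx; apply/setmul_dcosetP/eqUU/setmul_set1_setmulP.
have [Bg|cg] := bruhat_decomposition g.
  have [w [Umsw _]] := cell_UUmsU _ cell_n1.
  have [u [h [Uu [Hh ->]]]] := B_factor Bg.
  have [v [[Uv _] [a [b [Ua [Ub e]]]]]] :=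
    cell_UUmsU _ (cell_mulBl (H_sub_B Hh) (Ums_sub_cell Umsw)).
  case: Umsw => Uw _.
  exists (u ** a), v, b, (ginv w); split; first exact: (groupM groupU Uu Ua).
  do 2 split=> //.
  split; first by apply: (transport (groupV groupU Uw)); gnorm.
  have -> : h = h ** w ** ginv w by gnorm.
  by rewrite e; gnorm.
have [v [[Uv _] [a [b [Ua [Ub ->]]]]]] := cell_UUmsU _ cg.
exists a, v, b, g1; do 3 split=> //.
by split; [apply: (transport (group1 groupU)) | ]; gnorm.
Qed.

Lemma meets_of_UUmUUm_full : UUmUUm_full -> Ums_meets_cells.
Proof.
move=> full h Hh.
have /setmul4P [u1 [v1 [u2 [v2 [Uu1 [Uv1 [Uu2 [Uv2 e]]]]]]]] := full (n1 ** h).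
have Bk := H_sub_B (H_conjNV Nn1 Hh).
have n1hv1 : dcoset U (n1 ** h) v1.
  (* n1 h v2^-1 = k (n1 v2^-1 n1^-1) k^-1 n1 h with k = n1 h n1^-1 in B *)
  exists (ginv u1 ** (n1 ** (h ** ginv n1) **
           (ginv (n1 ** (v2 ** ginv n1)) ** ginv (n1 ** (h ** ginv n1))))), (ginv u2).
  split; first exact: (groupM groupU (groupV groupU Uu1) (U_conjBV Bk (groupV groupU Uv2))).
  split; first exact: (groupV groupU Uu2).
  have -> : v1 = ginv u1 ** (n1 ** h) ** ginv v2 ** ginv u2 by rewrite e; gnorm.
  by gnorm.
have cv1 : cell v1 by exists h.
exists v1; split; last exact/setmul_set1P.
split=> // v1_1; apply: cell_notB cv1 _.
by rewrite v1_1; exact: (group1 gB).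
Qed.

Lemma rank_one_equivalences :
  (Ums_meets_cells <-> UUmsU_eq_Un1HU) /\ (UUmsU_eq_Un1HU <-> UUmUUm_full).
Proof.
split; split; [exact: UUmsU_eq_of_meets | exact: meets_of_UUmsU_eq |
               exact: UUmUUm_full_of_UUmsU_eq |].
by move/meets_of_UUmUUm_full/UUmsU_eq_of_meets.
Qed.

End RankOneSplitBNPair.

Theorem lemma5 (G : group) (B N H U S : gset G) (n1 : G) :
  split_BN_pair B N H U S ->
  N n1 -> ~ H n1 ->
  (forall n, N n -> H n \/ exists h, H h /\ n = gmul n1 h) ->
  let Um := conjs U n1 in
  let Ums := setD1 Um in
  ((forall h, H h -> exists v, Ums v /\
        setmul (setmul U (set1 (gmul n1 h))) U v)
   <-> seteq (setmul (setmul U Ums) U)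
             (setmul (setmul U (setmul (set1 n1) H)) U)) /\
  (seteq (setmul (setmul U Ums) U)
         (setmul (setmul U (setmul (set1 n1) H)) U)
   <-> (forall g, setmul (setmul (setmul U Um) U) Um g)).
Proof.
move=> [gB [gN [gen [HBN [nHN [Srefl [Ngen [_ [exch [nUB [BUH [UH core]]]]]]]]]]]].
move=> Nn1 nHn1 N_rank1 /=.
exact: (rank_one_equivalences gB gN gen HBN nHN Srefl Ngen exch nUB BUH UH core
          Nn1 nHn1 N_rank1).
Qed.
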